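(* Let $K$ be a field of prime characteristic $p$, $C$ a cyclic $p$-group of order $q>1$, and $\tilde C$ its subgroup of index $p$. Let $A,B\in P_{KC}$. If $\alpha_1(A)=\alpha_1(B)$ and $A\!\downarrow_{\tilde C}=B\!\downarrow_{\tilde C}$, then $A=B$.
   Context: The indecomposable $KC$-modules up to isomorphism are $V_1,\dots,V_q$ with $\dim V_r=r$; $R_{KC}$ is the Green ring with $\mathbb{Z}$-basis $V_1,\dots,V_q$ (addition from direct sum, multiplication from tensor product). $P_{KC}$ is the $\mathbb{Z}$-span of the permutation modules, which has $\mathbb{Z}$-basis $V_1,V_p,V_{p^2},\dots,V_q$. For $A=\sum_i\alpha_i(A)V_i\in R_{KC}$, $\alpha_1(A)$ is the coefficient of $V_1$. $A\mapsto A\!\downarrow_{\tilde C}$ is the ring homomorphism $R_{KC}\to R_{K\tilde C}$ induced by restriction. *)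

From HB Require Import structures.
From mathcomp Require Import all_boot all_order all_algebra.
Set Implicit Arguments. Unset Strict Implicit. Unset Printing Implicit Defensive.
Import Order.TTheory GRing.Theory Num.Theory.
Local Open Scope ring_scope.

(* C = <g> cyclic of order q.  A (finite-dimensional) KC-module of dimension d
   is encoded by the matrix X of the action of g on row vectors K^d.
   Restriction to the subgroup tilde C = <g^p> (index p) is X ^+ p. *)

Definition mod_iso (K : fieldType) (m n : nat) (X : 'M[K]_m) (Y : 'M[K]_n) :=
  exists (P : 'M[K]_(m, n)) (Q : 'M[K]_(n, m)),
    [/\ P *m Q = 1%:M, Q *m P = 1%:M & X *m P = P *m Y].

(* The indecomposable module V_r : a single Jordan block of size r (eigenvalue 1). *)
Definition Vmod (K : fieldType) (r : nat) : 'M[K]_r :=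
  \matrix_(i < r, j < r) (((i : nat) == j) || ((j : nat) == i.+1))%:R.

Fixpoint Vsum (K : fieldType) (s : seq nat) : 'M[K]_(sumn s) :=
  match s return 'M[K]_(sumn s) with
  | [::] => 0
  | r :: s' => block_mx (Vmod K r) 0 0 (Vsum K s')
  end.

(* The module  sum_{r=1}^{q} c(r) V_r  for a nonnegative coefficient function c. *)
Definition sizes (q : nat) (c : nat -> nat) : seq nat :=
  flatten [seq nseq (c r) r | r <- iota 1 q].
Definition Vcomb (K : fieldType) (q : nat) (c : nat -> nat) : 'M[K]_(sumn (sizes q c)) :=
  Vsum K (sizes q c).

(* Elements of the Green ring R_{KC}: A r is the coefficient alpha_r(A) of V_r,
   with support in {1,...,q}. *)
Definition green_elt (q : nat) (A : nat -> int) : Prop :=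
  forall r, ((r == 0%N) || (q < r)%N) -> A r = 0.

(* P_{KC}: Z-span of V_1, V_p, V_{p^2}, ..., V_q. *)
Definition perm_elt (p q : nat) (A : nat -> int) : Prop :=
  green_elt q A /\ forall r, A r != 0 -> exists k, r = (p ^ k)%N.

Definition posc (A : nat -> int) (r : nat) : nat := if 0 <= A r then `|A r|%N else 0%N.
Definition negc (A : nat -> int) (r : nat) : nat := if A r < 0 then `|A r|%N else 0%N.

(* Writing A = A+ - A-, B = B+ - B-
   with A+,A-,B+,B- genuine modules, equality in the Green ring (free abelian group
   on isoclasses of indecomposables, by Krull-Schmidt) means
   (A+ + B-)|_{tilde C} is isomorphic to (B+ + A-)|_{tilde C}. *)
Definition res_eq (K : fieldType) (p q : nat) (A B : nat -> int) : Prop :=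
  mod_iso (Vcomb K q (fun r => posc A r + negc B r)%N ^+ p)
          (Vcomb K q (fun r => posc B r + negc A r)%N ^+ p).

From HB Require Import structures.
From mathcomp Require Import all_boot all_order all_algebra all_fingroup.
From mathcomp Require Import ring zify.
From Stdlib Require Import FunctionalExtensionality.
Set Implicit Arguments. Unset Strict Implicit. Unset Printing Implicit Defensive.
Import Order.TTheory GRing.Theory Num.Theory.
Local Open Scope ring_scope.

(* The generator of the index-p subgroup acts by X ^+ p, and on V_r we have
   (X ^+ p - 1) = N ^+ p with N the nilpotent shift (Frobenius in characteristic
   p), so the rank of (X ^+ p - 1) ^+ j on V_r is (r - p j)_+.  These ranks are
   isomorphism invariants, hence D := A - B satisfies
   sum_r D(r) (r - p j)_+ = 0 for every j.  D lives on p, p^2, ..., p^n since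
   alpha_1(A) = alpha_1(B); choosing p j = p^k - p kills every term with r < p^k
   and leaves p D(p^k), so D vanishes by descending induction on k. *)

Section BlockDiagonal.
Variable K : fieldType.

Lemma block_diag_exp (m n : nat) (X : 'M[K]_m) (Y : 'M[K]_n) k :
  (block_mx X 0 0 Y : 'M_(m + n)) ^+ k = block_mx (X ^+ k) 0 0 (Y ^+ k).
Proof.
elim: k => [|k IHk]; first by rewrite !expr0 -scalar_mx_block.
rewrite !exprS IHk -!mulmxE (mulmx_block X _ _ _ (X ^+ k)).
by rewrite !mulmx0 !mul0mx !add0r !addr0.
Qed.

Lemma block_diag_subr1 (m n : nat) (X : 'M[K]_m) (Y : 'M[K]_n) :
  (block_mx X 0 0 Y : 'M_(m + n)) - 1 = block_mx (X - 1) 0 0 (Y - 1).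
Proof.
by rewrite [1 in LHS]scalar_mx_block opp_block_mx add_block_mx !oppr0 !addr0.
Qed.

End BlockDiagonal.

Section ShiftMatrix.
Variable K : fieldType.

Definition shift_mx (r : nat) : 'M[K]_r :=
  \matrix_(i < r, j < r) ((j : nat) == i.+1)%:R.

Lemma Vmod_shift r : Vmod K r = shift_mx r + 1.
Proof.
apply/matrixP => i j; rewrite !mxE.
have [-> | ne_ij] := eqVneq i j; first by rewrite eqxx ltn_eqF //= add0r.
by rewrite /= (_ : ((i : nat) == j) = false) ?addr0 //; apply/negbTE.
Qed.

Lemma sum_ord_indicator (r m : nat) :
  \sum_(l < r) (((l : nat) == m)%:R : K) = (m < r)%:R.
Proof.
have [lt_mr | le_rm] := ltnP m r.
  rewrite (bigD1 (Ordinal lt_mr)) //= eqxx big1 ?addr0 // => l /eqP ne_l.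
  by case: eqP => // eq_l; case: ne_l; apply: val_inj.
by rewrite big1 // => l _; rewrite ltn_eqF // (leq_trans (ltn_ord l) le_rm).
Qed.

Lemma shift_mx_exp r k :
  shift_mx r ^+ k = \matrix_(i < r, j < r) ((j : nat) == (i + k)%N)%:R.
Proof.
elim: k => [|k IHk].
  by apply/matrixP => i j; rewrite expr0 !mxE addn0 eq_sym.
apply/matrixP => i j; rewrite exprSr -mulmxE IHk mxE.
under eq_bigr => l _ do rewrite !mxE.
transitivity (\sum_(l < r)
    (((l : nat) == (i + k)%N)%:R * ((j : nat) == (i + k).+1)%:R : K)).
  by apply: eq_bigr => l _; case: eqP => [-> //|]; rewrite !mul0r.
rewrite -mulr_suml sum_ord_indicator mxE addnS.
case: eqP => [eq_j|]; last by rewrite !mulr0.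
by rewrite -eq_j ltnW // mulr1.
Qed.

Lemma iter_ordS r k (i : 'I_r) : val (iter k (@ordS r) i) = ((i + k) %% r)%N.
Proof.
elim: k => [|k IHk]; first by rewrite addn0 modn_small.
by rewrite iterS /= IHk -addn1 modnDml addn1 addnS.
Qed.

Lemma shift_mx_exp_col_perm r k :
  let s : {perm 'I_r.+1} := perm (@ordS_inj r.+1) in
  shift_mx r.+1 ^+ k = col_perm ((s ^+ k)^-1)%g (pid_mx (r.+1 - k)).
Proof.
move=> s; apply/matrixP => i j; rewrite shift_mx_exp !mxE.
have -> : ((i : nat) == (s ^- k)%g j) = ((s ^+ k)%g i == j).
  change ((i == (s ^- k)%g j :> 'I_r.+1) = ((s ^+ k)%g i == j)).
  by rewrite eq_sym (canF_eq (permKV _)).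
have s_val : val ((s ^+ k)%g i) = ((i + k) %% r.+1)%N.
  rewrite permX -iter_ordS; congr val.
  by elim: (k) => //= l ->; rewrite permE.
rewrite -[_ == j]/(val ((s ^+ k)%g i) == val j) s_val.
congr (_%:R); rewrite ltn_subRL [(k + i)%N]addnC.
have [lt_ikr | le_rik] := ltnP (i + k) r.+1.
  by rewrite modn_small // andbT eq_sym.
by rewrite andbF ltn_eqF // (leq_trans (ltn_ord j)).
Qed.

Lemma rank_shift_mx_exp r k : \rank (shift_mx r ^+ k) = (r - k)%N.
Proof.
case: r => [|r]; first by apply/eqP; rewrite -leqn0 rank_leq_row.
rewrite shift_mx_exp_col_perm col_permE mxrankMfree ?rank_pid_mx ?leq_subr //.
by rewrite row_free_unit unitmx_perm.
Qed.

Lemma Vmod_exp_pchar_subr1 p r : prime p -> p \in [pchar K] ->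
  Vmod K r ^+ p - 1 = shift_mx r ^+ p.
Proof.
case: p => [//|p] p_pr pK; rewrite Vmod_shift exprDn_comm; last exact: commr1.
rewrite big_ord_recr big_ord_recl /= subnn bin0 binn expr0 !expr1n !mulr1n.
rewrite mul1r mulr1 subn0 big1 ?addr0 ?addrK // => i _.
have i_range : (0 < bump 0 i < p.+1)%N by rewrite /bump /= add1n ltnS ltn_ord.
have [d ->] := dvdnP (prime_dvd_bin p_pr i_range).
by rewrite mulrnA -[_ *+ p.+1]scaler_nat (pcharf0 pK) scale0r.
Qed.

End ShiftMatrix.

Section Ranks.
Variable K : fieldType.

Lemma rank_Vsum_restr p (s : seq nat) j : prime p -> p \in [pchar K] ->
  \rank ((Vsum K s ^+ p - 1) ^+ j) = sumn [seq (r - p * j)%N | r <- s].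
Proof.
move=> p_pr pK; elim: s => [|r s IHs] /=.
  by apply/eqP; rewrite -leqn0 rank_leq_row.
rewrite block_diag_exp block_diag_subr1 block_diag_exp rank_diag_block_mx IHs.
by rewrite Vmod_exp_pchar_subr1 // -exprM rank_shift_mx_exp.
Qed.

Lemma sumn_map_sizes q (c f : nat -> nat) :
  sumn [seq f r | r <- sizes q c] = (\sum_(r <- iota 1 q) c r * f r)%N.
Proof.
rewrite /sizes; elim: (iota 1 q) => [|r rs IHrs]; first by rewrite big_nil.
by rewrite /= map_cat sumn_cat IHrs big_cons map_nseq sumn_nseq mulnC.
Qed.

Lemma rank_Vcomb_restr p q (c : nat -> nat) j : prime p -> p \in [pchar K] ->
  \rank ((Vcomb K q c ^+ p - 1) ^+ j) = (\sum_(r <- iota 1 q) c r * (r - p * j))%N.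
Proof. by move=> p_pr pK; rewrite rank_Vsum_restr // sumn_map_sizes. Qed.

Lemma intertwine_subr1_exp m n (X : 'M[K]_m) (Y : 'M[K]_n) P j :
  X *m P = P *m Y -> (X - 1) ^+ j *m P = P *m (Y - 1) ^+ j.
Proof.
move=> XP; have XP1 : (X - 1) *m P = P *m (Y - 1).
  by rewrite mulmxBl mulmxBr mul1mx mulmx1 XP.
elim: j => [|j IHj]; first by rewrite !expr0 mul1mx mulmx1.
by rewrite !exprSr -!mulmxE -mulmxA XP1 mulmxA IHj -mulmxA.
Qed.

Lemma intertwine_mxrank m n (M : 'M[K]_m) (N : 'M[K]_n) P Q :
  P *m Q = 1%:M -> Q *m P = 1%:M -> M *m P = P *m N -> \rank M = \rank N.
Proof.
move=> PQ QP MP; apply/eqP; rewrite eqn_leq; apply/andP; split.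
  rewrite -[M]mulmx1 -PQ mulmxA (leq_trans (mxrankM_maxl _ _)) //.
  by rewrite MP mxrankM_maxr.
rewrite -[N]mul1mx -QP -mulmxA -MP (leq_trans (mxrankM_maxr _ _)) //.
exact: mxrankM_maxl.
Qed.

Lemma mod_iso_rank_subr1_exp m n (X : 'M[K]_m) (Y : 'M[K]_n) j :
  mod_iso X Y -> \rank ((X - 1) ^+ j) = \rank ((Y - 1) ^+ j).
Proof.
move=> [P [Q [PQ QP XP]]].
exact: intertwine_mxrank PQ QP (intertwine_subr1_exp j XP).
Qed.

End Ranks.

Lemma posc_sub_negc (A : nat -> int) r : (posc A r)%:Z - (negc A r)%:Z = A r.
Proof.
by rewrite /posc /negc; case: (A r) => n //=; rewrite ?subr0 // NegzE add0r.
Qed.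

Lemma res_eq_truncated_moments (K : fieldType) p q (A B : nat -> int) j :
  prime p -> p \in [pchar K] -> res_eq K p q A B ->
  \sum_(r <- iota 1 q) (A r - B r) * (r - p * j)%:Z = 0.
Proof.
move=> p_pr pK /(mod_iso_rank_subr1_exp j).
rewrite !rank_Vcomb_restr // => /(congr1 Posz).
rewrite !(big_morph Posz PoszD (erefl _)) => /eqP.
rewrite -subr_eq0 -sumrB => /eqP moments0.
rewrite -[RHS]moments0; apply: eq_bigr => r _.
rewrite -(posc_sub_negc A r) -(posc_sub_negc B r) !PoszM !PoszD; ring.
Qed.

Lemma truncated_sub_powers p m k : (1 < p)%N -> (0 < m < k)%N ->
  (p ^ m - (p ^ k - p))%N = 0%N.
Proof.
move=> p_gt1 /andP [m_gt0 lt_mk]; have k_gt1 := leq_ltn_trans m_gt0 lt_mk.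
have k_gt0 := ltnW k_gt1.
have le_pm_pk1 : (p ^ m <= p ^ k.-1)%N by rewrite leq_exp2l // -ltnS prednK.
have le_p_pk1 : (p <= p ^ k.-1)%N.
  by rewrite -[X in (X <= _)%N]expn1 leq_exp2l // -ltnS prednK.
have pk_eq : (p ^ k = p * p ^ k.-1)%N by rewrite -expnS prednK.
rewrite pk_eq; nia.
Qed.

Section PowerSupported.
Variables (p n : nat) (D : nat -> int).
Hypothesis p_gt1 : (1 < p)%N.
Hypothesis D_supp : forall r, D r != 0 -> exists2 m, r = (p ^ m)%N & (0 < m <= n)%N.
Hypothesis D_moments :
  forall j, \sum_(r <- iota 1 (p ^ n)) D r * (r - p * j)%:Z = 0.

Lemma power_gt_support_eq0 k : (n < k)%N -> D (p ^ k) = 0.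
Proof.
move=> lt_nk; apply/eqP; apply: contraT => /D_supp [m /eqP].
by rewrite eqn_exp2l // => /eqP <- /andP [_]; rewrite leqNgt lt_nk.
Qed.

(* The moment with p j = p ^ k - p only sees p ^ k and the larger powers. *)
Lemma power_eq0_from_above k : (0 < k <= n)%N ->
  (forall m, (k < m)%N -> D (p ^ m) = 0) -> D (p ^ k) = 0.
Proof.
move=> /andP [k_gt0 le_kn] D_above.
have := D_moments (p ^ k.-1 - 1).
have -> : (p * (p ^ k.-1 - 1) = p ^ k - p)%N.
  by rewrite mulnBr muln1 -expnS prednK.
have le_p_pk : (p <= p ^ k)%N by rewrite -[X in (X <= _)%N]expn1 leq_exp2l.
have pk_in : (p ^ k)%N \in iota 1 (p ^ n).
  by rewrite mem_iota expn_gt0 (ltnW p_gt1) add1n ltnS leq_exp2l.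
rewrite (bigD1_seq _ pk_in (iota_uniq _ _)) /= big1_seq ?addr0.
  rewrite subKn // => /eqP; rewrite mulf_eq0 => /orP [/eqP //|].
  by move=> /eqP [] p0; move: p_gt1; rewrite p0.
move=> r /andP [ne_r _]; have [-> | /D_supp [m r_eq /andP [m_gt0 _]]] := eqVneq (D r) 0.
  by rewrite mul0r.
rewrite r_eq in ne_r *; have [lt_mk | lt_km | eq_mk] := ltngtP m k.
- by rewrite truncated_sub_powers ?m_gt0 // mulr0.
- by rewrite D_above // mul0r.
- by rewrite eq_mk eqxx in ne_r.
Qed.

Lemma power_supported_eq0 r : D r = 0.
Proof.
have [// | /D_supp [m -> m_range]] := eqVneq (D r) 0.
have [i] := ubnP (n - m); elim: i m m_range => // i IHi m m_range lt_nm_i.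
apply: power_eq0_from_above => // m' lt_mm'.
have [lt_nm' | le_m'n] := ltnP n m'; first exact: power_gt_support_eq0.
apply: IHi; first by rewrite le_m'n andbT (leq_ltn_trans _ lt_mm').
by move: m_range lt_nm_i => /andP [_ le_mn]; lia.
Qed.

End PowerSupported.

Theorem corollary4p2 (K : fieldType) (p n : nat) (A B : nat -> int) :
  prime p -> p \in [pchar K] -> (0 < n)%N ->
  perm_elt p (p ^ n) A -> perm_elt p (p ^ n) B ->
  A 1%N = B 1%N ->
  res_eq K p (p ^ n) A B ->
  A = B.
Proof.
move=> p_pr pK _ [gA pA] [gB pB] A1 Hres.
have p_gt1 := prime_gt1 p_pr.
pose D r := A r - B r.
have D_supp r : D r != 0 -> exists2 m, r = (p ^ m)%N & (0 < m <= n)%N.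
  move=> Dr; have [m r_eq] : exists m, r = (p ^ m)%N.
    have [Ar0 | /pA //] := eqVneq (A r) 0.
    by apply: pB; apply: contra Dr => /eqP Br0; rewrite /D Ar0 Br0 subrr.
  exists m => //; apply/andP; split.
    by rewrite lt0n; apply: contra Dr => /eqP m0; rewrite r_eq m0 /D A1 subrr.
  rewrite leqNgt; apply: contra Dr => lt_nm.
  have lt_q_r : (p ^ n < r)%N by rewrite r_eq ltn_exp2l.
  by rewrite /D gA ?gB ?lt_q_r ?orbT // subrr.
have D_moments j : \sum_(r <- iota 1 (p ^ n)) D r * (r - p * j)%:Z = 0.
  exact: (res_eq_truncated_moments j p_pr pK Hres).
apply: functional_extensionality => r; apply: subr0_eq.
exact: (power_supported_eq0 p_gt1 D_supp D_moments).
Qed.
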